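(* Let $H=(v_1,\dots,v_6)$ be an embedded equilateral hexagon, considered up to translations and rotations, whose action-angle coordinates $(d_1,d_2,d_3,\theta_1,\theta_2,\theta_3)$ for the $T_{135}$ triangulation are defined. If $J(H)=(-1,1)$, then $\theta_i\in(0,\pi)$ for all $i\in\{1,2,3\}$, and $\theta_1+\theta_2<\pi$, $\theta_1+\theta_3<\pi$, $\theta_2+\theta_3<\pi$.
   Context: An equilateral hexagon is an ordered 6-tuple $H=(v_1,\dots,v_6)$ in $\mathbb{R}^3$ with $\|v_i-v_{i+1}\|=1$ (indices mod 6), edges $e_i=[v_i,v_{i+1}]$, oriented $v_1\to v_2\to\cdots\to v_6\to v_1$; embedded means non-adjacent edges are disjoint and adjacent ones meet only at their common endpoint. Standard position: $v_1=0$, $v_3$ on the positive $x$-axis, $v_5$ in the $xy$-plane with positive $y$-coordinate. Action-angle coordinates ($T_{135}$ triangulation), defined when $v_1,v_3,v_5$ are not collinear and $0<d_i<2$: $d_1=\|v_3-v_1\|$, $d_2=\|v_5-v_3\|$, $d_3=\|v_1-v_5\|$; with $m_1,m_2,m_3$ the midpoints of $[v_1,v_3],[v_3,v_5],[v_5,v_1]$, $u_1,u_2,u_3$ the unit vectors in the $xy$-plane perpendicular to these segments pointing toward the opposite vertex of triangle $v_1v_3v_5$ (toward $v_5,v_1,v_3$ respectively), and $e_z=(0,0,1)$, the angles $\theta_i\in[0,2\pi)$ are determined by $v_{2i}=m_i+\tfrac12\sqrt{4-d_i^2}(\cos\theta_i\,u_i+\sin\theta_i\,e_z)$ (regular planar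 hexagon: all $\theta_i=\pi$). Joint Chirality-Curl: $curl(H)=\operatorname{sign}\big((v_3-v_1)\times(v_5-v_1)\cdot(v_2-v_1)\big)$. For $i=2,4,6$, $T_i$ is the open triangular disk with vertices $v_{i-1},v_i,v_{i+1}$, oriented by the right-hand rule (normal $(v_i-v_{i-1})\times(v_{i+1}-v_i)$), and $\Delta_i$ is the algebraic intersection number of $T_i$ with the oriented polygon $H$. Then $J(H)=(\Delta_2\Delta_4\Delta_6,\ \Delta_2^2\Delta_4^2\Delta_6^2\,curl(H))$. *)

From Stdlib Require Import Reals Lra ZArith List ClassicalEpsilon.
Open Scope R_scope.

Record vec3 := V3 { vx : R; vy : R; vz : R }.

Definition vadd (a b : vec3) : vec3 := V3 (vx a + vx b) (vy a + vy b) (vz a + vz b).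
Definition vsub (a b : vec3) : vec3 := V3 (vx a - vx b) (vy a - vy b) (vz a - vz b).
Definition vscale (c : R) (a : vec3) : vec3 := V3 (c * vx a) (c * vy a) (c * vz a).
Definition dot (a b : vec3) : R := vx a * vx b + vy a * vy b + vz a * vz b.
Definition cross (a b : vec3) : vec3 :=
  V3 (vy a * vz b - vz a * vy b) (vz a * vx b - vx a * vz b) (vx a * vy b - vy a * vx b).
Definition vnorm (a : vec3) : R := sqrt (dot a a).
Definition vzero : vec3 := V3 0 0 0.
Definition ez : vec3 := V3 0 0 1.
Definition midpoint (P Q : vec3) : vec3 := vscale (1/2) (vadd P Q).

(** A hexagon: [vtx H i] is v_i, indices taken mod 6 (v_1 = H 0, ..., v_6 = H 5,
    v_7 = v_1, v_0 = v_6).  Only H 0 .. H 5 matter. *)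
Definition hexagon := nat -> vec3.
Definition vtx (H : hexagon) (i : nat) : vec3 := H ((i + 5) mod 6)%nat.

Definition equilateral (H : hexagon) : Prop :=
  forall i : nat, (1 <= i <= 6)%nat -> vnorm (vsub (vtx H (S i)) (vtx H i)) = 1.

Definition on_seg (a b p : vec3) : Prop :=
  exists t : R, 0 <= t <= 1 /\ p = vadd a (vscale t (vsub b a)).

Definition on_edge (H : hexagon) (i : nat) (p : vec3) : Prop :=
  on_seg (vtx H i) (vtx H (S i)) p.

(** Embedded: non-adjacent edges are disjoint, adjacent edges meet only in their
    common endpoint. *)
Definition embedded (H : hexagon) : Prop :=
  forall (i j : nat) (p : vec3), (1 <= i <= 6)%nat -> (1 <= j <= 6)%nat -> i <> j ->
    on_edge H i p -> on_edge H j p ->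
    ((j mod 6 = (S i) mod 6)%nat /\ p = vtx H (S i)) \/
    ((i mod 6 = (S j) mod 6)%nat /\ p = vtx H i).

Definition standard_position (H : hexagon) : Prop :=
  vtx H 1 = vzero /\
  vy (vtx H 3) = 0 /\ vz (vtx H 3) = 0 /\ 0 < vx (vtx H 3) /\
  vz (vtx H 5) = 0 /\ 0 < vy (vtx H 5).

Definition collinear (a b c : vec3) : Prop := cross (vsub b a) (vsub c a) = vzero.

(** diagonal lengths d_1 = |v_3 - v_1|, d_2 = |v_5 - v_3|, d_3 = |v_1 - v_5| *)
Definition diag (H : hexagon) (i : nat) : R :=
  vnorm (vsub (vtx H (2 * i + 1)) (vtx H (2 * i - 1))).

Definition aa_defined (H : hexagon) : Prop :=
  ~ collinear (vtx H 1) (vtx H 3) (vtx H 5) /\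
  forall i : nat, (1 <= i <= 3)%nat -> 0 < diag H i < 2.

Definition inward_normal (u P Q O : vec3) : Prop :=
  vz u = 0 /\ vnorm u = 1 /\ dot u (vsub Q P) = 0 /\
  0 < dot u (vsub O (midpoint P Q)).

Definition theta_coord (H : hexagon) (i : nat) (theta : R) : Prop :=
  0 <= theta < 2 * PI /\
  exists u : vec3,
    inward_normal u (vtx H (2 * i - 1)) (vtx H (2 * i + 1)) (vtx H (2 * i + 3)) /\
    vtx H (2 * i) =
      vadd (midpoint (vtx H (2 * i - 1)) (vtx H (2 * i + 1)))
           (vscale (1/2 * sqrt (4 - diag H i ^ 2))
                   (vadd (vscale (cos theta) u) (vscale (sin theta) ez))).

Definition sgnZ (x : R) : Z :=
  if Rlt_dec 0 x then 1%Z else if Rlt_dec x 0 then (-1)%Z else 0%Z.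

Definition curl (H : hexagon) : Z :=
  sgnZ (dot (cross (vsub (vtx H 3) (vtx H 1)) (vsub (vtx H 5) (vtx H 1)))
            (vsub (vtx H 2) (vtx H 1))).

Definition in_open_tri (A B C p : vec3) : Prop :=
  exists a b c : R, 0 < a /\ 0 < b /\ 0 < c /\ a + b + c = 1 /\
    p = vadd (vadd (vscale a A) (vscale b B)) (vscale c C).

(** Crossings of the plane of the triangle are counted
    with the standard half-open convention (an edge crosses upward iff
    h(a) <= 0 < h(b), downward iff h(b) <= 0 < h(a), where h is the signed
    height over the plane), so that a transverse passage through a vertex is
    counted once and a tangential touch is counted zero; the crossing counts
    iff its point lies in the open triangle. *)
Definition crossing_contrib (A B C a b : vec3) : Z :=
  let n := cross (vsub B A) (vsub C B) in
  let ha := dot n (vsub a A) in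
  let hb := dot n (vsub b A) in
  let p := vadd a (vscale (ha / (ha - hb)) (vsub b a)) in
  if excluded_middle_informative (in_open_tri A B C p) then
    (if Rle_dec ha 0 then (if Rlt_dec 0 hb then 1%Z else 0%Z)
     else (if Rle_dec hb 0 then (-1)%Z else 0%Z))
  else 0%Z.

Definition Delta (H : hexagon) (i : nat) : Z :=
  fold_right Z.add 0%Z
    (map (fun j => crossing_contrib (vtx H (i - 1)) (vtx H i) (vtx H (S i))
                                    (vtx H j) (vtx H (S j)))
         (seq 1 6)).

Definition JCC (H : hexagon) : Z * Z :=
  ((Delta H 2 * Delta H 4 * Delta H 6)%Z,
   (Delta H 2 ^ 2 * Delta H 4 ^ 2 * Delta H 6 ^ 2 * curl H)%Z).

From Pilot Require Import Defs.
From Stdlib Require Import Reals ZArith Lra Psatz Lia ClassicalEpsilon.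
Open Scope R_scope.

(* In standard position the triangle v1 v3 v5 lies counterclockwise in the xy-plane and each
   even vertex v_2i sits on a flap hinged on one of its sides, raised at the angle theta_i.
   Only the two edges opposite T_i can cross it, and when sin theta_i > 0 the flap geometry
   fixes their signs: the edge from the next flap down to the opposite vertex can only cross
   upwards, the edge from that vertex up to the previous flap only downwards, and a crossing
   forces the sine of the other angle and of its sum with theta_i to be positive.  Two
   triangles sharing a vertex cannot pierce each other, so an upward crossing of T_i excludes
   a downward crossing of the next triangle.  Now curl = 1 gives sin theta_1 > 0, and the
   product of the Delta_i being -1 excludes the all-upward pattern; hence every Delta_i is a
   downward crossing, which yields all the sine inequalities, i.e. the angle inequalities. *)

Ltac vec3_ring :=
  repeat match goal with v : vec3 |- _ => destruct v end;
  unfold vadd, vsub, vscale, dot, cross, midpoint, ez, vzero in *; simpl in *;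
  lazymatch goal with |- @eq vec3 _ _ => f_equal | _ => idtac end; first [ring | field].

Definition tri_normal (A B C : vec3) : vec3 := cross (vsub B A) (vsub C B).

(* [height] and [plane_crossing] are the quantities [ha], [hb] and [p] of [crossing_contrib]. *)
Definition height (A B C p : vec3) : R := dot (tri_normal A B C) (vsub p A).

Definition plane_crossing (A B C a b : vec3) : vec3 :=
  vadd a (vscale (height A B C a / (height A B C a - height A B C b)) (vsub b a)).

Definition opposite_sides (ha hb : R) : Prop := ha <= 0 < hb \/ hb <= 0 < ha.

Lemma dot_self_unit u : vnorm u = 1 -> dot u u = 1.
Proof.
  unfold vnorm. intros E.
  assert (Hnn : 0 <= dot u u) by (unfold dot; nra).
  rewrite <- (sqrt_sqrt _ Hnn), E. ring.
Qed.

Lemma tri_normal_rotate A B C : tri_normal B C A = tri_normal A B C.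
Proof. unfold tri_normal. vec3_ring. Qed.

Lemma height_A A B C : height A B C A = 0.
Proof. unfold height, tri_normal. vec3_ring. Qed.

Lemma height_B A B C : height A B C B = 0.
Proof. unfold height, tri_normal. vec3_ring. Qed.

Lemma height_C A B C : height A B C C = 0.
Proof. unfold height, tri_normal. vec3_ring. Qed.

Lemma height_degenerate A B C p : tri_normal A B C = vzero -> height A B C p = 0.
Proof. unfold height. intros ->. vec3_ring. Qed.

Lemma in_open_tri_rotate A B C p : in_open_tri A B C p -> in_open_tri B C A p.
Proof.
  intros (a & b & c & Ha & Hb & Hc & Hs & ->).
  exists b, c, a. do 4 (split; [lra|]). vec3_ring.
Qed.

Lemma in_open_tri_reverse A B C p : in_open_tri A B C p -> in_open_tri C B A p.
Proof.
  intros (a & b & c & Ha & Hb & Hc & Hs & ->).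
  exists c, b, a. do 4 (split; [lra|]). vec3_ring.
Qed.

Lemma open_tri_vertex_degenerate A B C : in_open_tri A B C A -> tri_normal A B C = vzero.
Proof.
  intros (a & b & c & Ha & Hb & Hc & Hs & E).
  assert (Hdep : vadd (vscale b (vsub B A)) (vscale c (vsub C A)) = vzero).
  { transitivity (vsub (vadd (vadd (vscale a A) (vscale b B)) (vscale c C)) A);
      [replace a with (1 - b - c) by lra; vec3_ring | rewrite <- E; vec3_ring]. }
  assert (Hb_normal : vscale b (tri_normal A B C) =
                      cross (vadd (vscale b (vsub B A)) (vscale c (vsub C A))) (vsub C A))
    by (unfold tri_normal; vec3_ring).
  rewrite Hdep in Hb_normal.
  destruct (tri_normal A B C) as [x y z].
  unfold vscale, cross, vzero in Hb_normal; simpl in Hb_normal.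
  injection Hb_normal as Ex Ey Ez. unfold vzero.
  f_equal; apply (Rmult_eq_reg_l b); lra.
Qed.

Lemma crossing_contrib_spec A B C a b :
  crossing_contrib A B C a b = 0%Z \/
  (crossing_contrib A B C a b = 1%Z /\ height A B C a <= 0 < height A B C b /\
   in_open_tri A B C (plane_crossing A B C a b)) \/
  (crossing_contrib A B C a b = (-1)%Z /\ height A B C b <= 0 < height A B C a /\
   in_open_tri A B C (plane_crossing A B C a b)).
Proof.
  change (crossing_contrib A B C a b) with
    (if excluded_middle_informative (in_open_tri A B C (plane_crossing A B C a b)) then
       (if Rle_dec (height A B C a) 0 then (if Rlt_dec 0 (height A B C b) then 1%Z else 0%Z)
        else (if Rle_dec (height A B C b) 0 then (-1)%Z else 0%Z))
     else 0%Z).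
  destruct (excluded_middle_informative _); [|now left].
  destruct (Rle_dec (height A B C a) 0), (Rlt_dec 0 (height A B C b)),
    (Rle_dec (height A B C b) 0); intuition lra.
Qed.

Lemma crossing_contrib_nonzero A B C a b :
  crossing_contrib A B C a b <> 0%Z ->
  opposite_sides (height A B C a) (height A B C b) /\
  in_open_tri A B C (plane_crossing A B C a b).
Proof.
  unfold opposite_sides.
  destruct (crossing_contrib_spec A B C a b) as [E | [(_ & Hh & Hin) | (_ & Hh & Hin)]];
    tauto.
Qed.

Lemma plane_crossing_from_plane A B C a b :
  height A B C a = 0 -> plane_crossing A B C a b = a.
Proof.
  unfold plane_crossing. intros ->. unfold Rdiv. rewrite Rmult_0_l. vec3_ring.
Qed.

Lemma plane_crossing_to_plane A B C a b :
  height A B C b = 0 -> height A B C a <> 0 -> plane_crossing A B C a b = b.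
Proof.
  unfold plane_crossing. intros -> Ha. rewrite Rminus_0_r, Rdiv_diag by exact Ha. vec3_ring.
Qed.

Lemma crossing_contrib_within_plane A B C a b :
  height A B C a = 0 -> height A B C b = 0 -> crossing_contrib A B C a b = 0%Z.
Proof.
  intros Ha Hb. destruct (Z.eq_dec (crossing_contrib A B C a b) 0) as [|Hnz]; [easy|].
  destruct (crossing_contrib_nonzero _ _ _ _ _ Hnz) as [Hs _].
  unfold opposite_sides in Hs. lra.
Qed.

Lemma crossing_contrib_from_C A B C b : crossing_contrib A B C C b = 0%Z.
Proof.
  destruct (Z.eq_dec (crossing_contrib A B C C b) 0) as [|Hnz]; [easy|].
  destruct (crossing_contrib_nonzero _ _ _ _ _ Hnz) as [Hs Hin].
  rewrite plane_crossing_from_plane in Hin by apply height_C.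
  do 2 apply in_open_tri_rotate in Hin.
  apply open_tri_vertex_degenerate in Hin. rewrite 2!tri_normal_rotate in Hin.
  unfold opposite_sides in Hs. rewrite !(height_degenerate _ _ _ _ Hin) in Hs. lra.
Qed.

Lemma crossing_contrib_to_A A B C a : crossing_contrib A B C a A = 0%Z.
Proof.
  destruct (Z.eq_dec (crossing_contrib A B C a A) 0) as [|Hnz]; [easy|].
  destruct (crossing_contrib_nonzero _ _ _ _ _ Hnz) as [Hs Hin].
  unfold opposite_sides in Hs. rewrite height_A in Hs.
  rewrite plane_crossing_to_plane in Hin by (apply height_A || lra).
  apply open_tri_vertex_degenerate in Hin.
  rewrite !(height_degenerate _ _ _ _ Hin) in Hs. lra.
Qed.

Lemma crossing_contrib_AB A B C : crossing_contrib A B C A B = 0%Z.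
Proof. apply crossing_contrib_within_plane; [apply height_A | apply height_B]. Qed.

Lemma crossing_contrib_BC A B C : crossing_contrib A B C B C = 0%Z.
Proof. apply crossing_contrib_within_plane; [apply height_B | apply height_C]. Qed.

Lemma Delta_opposite_edges H i : (1 <= i <= 6)%nat ->
  let T := crossing_contrib (vtx H (i - 1)) (vtx H i) (vtx H (S i)) in
  Defs.Delta H i = (T (vtx H (i + 2)) (vtx H (i + 3)) + T (vtx H (i + 3)) (vtx H (i + 4)))%Z.
Proof.
  intros Hi T. unfold T, Defs.Delta.
  destruct i as [|[|[|[|[|[|[|i]]]]]]]; try lia;
    cbn [List.seq List.map List.fold_right]; unfold vtx;
    cbv [Nat.modulo Nat.divmod snd Nat.sub Nat.add];
    rewrite crossing_contrib_AB, crossing_contrib_BC, crossing_contrib_from_C,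
      crossing_contrib_to_A; lia.
Qed.

Lemma plane_crossing_on_seg A B C a b :
  opposite_sides (height A B C a) (height A B C b) -> on_seg a b (plane_crossing A B C a b).
Proof.
  unfold opposite_sides, plane_crossing. intros Hs.
  set (ha := height A B C a) in *. set (hb := height A B C b) in *.
  exists (ha / (ha - hb)). split; [|reflexivity].
  assert (Ht : ha / (ha - hb) * (ha - hb) = ha) by (field; lra).
  destruct Hs; split; nra.
Qed.

Lemma height_on_seg A B C a b p :
  height A B C a = 0 -> height A B C b = 0 -> on_seg a b p -> height A B C p = 0.
Proof.
  intros Ha Hb (t & _ & ->).
  transitivity ((1 - t) * height A B C a + t * height A B C b);
    [unfold height, tri_normal; vec3_ring | rewrite Ha, Hb; ring].
Qed.

Lemma open_tri_plane_section A B C S U W p :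
  height A B C S = 0 -> height A B C U <> height A B C W ->
  in_open_tri S U W p -> height A B C p = 0 ->
  exists k, 0 < k < 1 /\ vsub p S = vscale k (vsub (plane_crossing A B C U W) S).
Proof.
  intros HS Hne (a & b & c & Ha & Hb & Hc & Hs & ->) Hp.
  unfold plane_crossing.
  set (hU := height A B C U) in *. set (hW := height A B C W) in *.
  assert (Hbal : b * hU + c * hW = 0).
  { rewrite <- Hp, <- (Rplus_0_l (b * hU)), <- (Rmult_0_r a), <- HS.
    unfold hU, hW, height. replace a with (1 - b - c) by lra. vec3_ring. }
  set (t := hU / (hU - hW)).
  assert (Hct : c = (b + c) * t).
  { unfold t. field_simplify_eq; lra. }
  exists (b + c). split; [lra|].
  replace a with (1 - b - c) by lra.
  assert (Hbt : b = (b + c) * (1 - t)) by lra.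
  set (k := b + c) in *. clearbody t k. rewrite Hbt, Hct. vec3_ring.
Qed.

Lemma vsub_fixed_by_scale x y k : k <> 1 -> vsub x y = vscale k (vsub x y) -> x = y.
Proof.
  intros Hk E. destruct x as [x1 x2 x3], y as [y1 y2 y3].
  unfold vsub, vscale in E; simpl in E. injection E as E1 E2 E3.
  f_equal; apply (Rmult_eq_reg_l (1 - k)); lra.
Qed.

(* Otherwise the two crossing points p1, p2 satisfy p2 - S = k (p1 - S) and
   p1 - S = k' (p2 - S) with 0 < k, k' < 1, so p1 = S lies in the open triangle P Q S. *)
Lemma crossing_contrib_shared_vertex P Q S U W :
  crossing_contrib P Q S U W = 0%Z \/ crossing_contrib S U W P Q = 0%Z.
Proof.
  destruct (Z.eq_dec (crossing_contrib P Q S U W) 0) as [|N1]; [now left|].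
  destruct (Z.eq_dec (crossing_contrib S U W P Q) 0) as [|N2]; [now right|].
  exfalso.
  destruct (crossing_contrib_nonzero _ _ _ _ _ N1) as [O1 T1].
  destruct (crossing_contrib_nonzero _ _ _ _ _ N2) as [O2 T2].
  set (p1 := plane_crossing P Q S U W) in *. set (p2 := plane_crossing S U W P Q) in *.
  assert (H2 : height P Q S p2 = 0)
    by exact (height_on_seg _ _ _ _ _ _ (height_A _ _ _) (height_B _ _ _)
                (plane_crossing_on_seg _ _ _ _ _ O2)).
  assert (H1 : height S U W p1 = 0)
    by exact (height_on_seg _ _ _ _ _ _ (height_B _ _ _) (height_C _ _ _)
                (plane_crossing_on_seg _ _ _ _ _ O1)).
  assert (T1' : in_open_tri S P Q p1) by (do 2 apply in_open_tri_rotate; exact T1).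
  unfold opposite_sides in O1, O2.
  destruct (open_tri_plane_section P Q S S U W p2 (height_C _ _ _) ltac:(lra) T2 H2)
    as (k & Hk & E2).
  destruct (open_tri_plane_section S U W S P Q p1 (height_A _ _ _) ltac:(lra) T1' H1)
    as (k' & Hk' & E1).
  fold p1 in E2. fold p2 in E1.
  assert (Hp1 : p1 = S).
  { apply (vsub_fixed_by_scale _ _ (k' * k)); [nra|].
    rewrite E1 at 1. rewrite E2. vec3_ring. }
  rewrite Hp1 in T1'.
  apply open_tri_vertex_degenerate in T1'. rewrite 2!tri_normal_rotate in T1'.
  rewrite !(height_degenerate _ _ _ _ T1') in O1. lra.
Qed.

(* [theta_coord H i theta] unfolds to [0 <= theta < 2 * PI] together with
   [flap v_(2i-1) v_(2i+1) v_(2i+3) (1/2 * sqrt (4 - d_i ^ 2)) theta v_2i]. *)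
Definition flap (P Q O : vec3) (r theta : R) (X : vec3) : Prop :=
  exists u, inward_normal u P Q O /\
    X = vadd (midpoint P Q) (vscale r (vadd (vscale (cos theta) u) (vscale (sin theta) ez))).

Lemma dot_combination z x y a b :
  dot z (vadd (vscale a x) (vscale b y)) = a * dot z x + b * dot z y.
Proof. vec3_ring. Qed.

Lemma dot_vsub_swap u a b : dot u (vsub a b) = - dot u (vsub b a).
Proof. vec3_ring. Qed.

Lemma inward_normal_facts u P Q O : inward_normal u P Q O ->
  vz u = 0 /\ dot u u = 1 /\ dot u (vsub Q P) = 0 /\
  0 < dot u (vsub O P) /\ 0 < dot u (vsub O Q).
Proof.
  intros (Hz & Hn & Hperp & Hin). apply dot_self_unit in Hn.
  assert (EP : dot u (vsub O P) = dot u (vsub O (midpoint P Q)) + dot u (vsub Q P) / 2)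
    by (unfold Rdiv; vec3_ring).
  assert (EQ : dot u (vsub O Q) = dot u (vsub O (midpoint P Q)) - dot u (vsub Q P) / 2)
    by (unfold Rdiv; vec3_ring).
  repeat split; lra.
Qed.

Lemma inward_normal_swap u P Q O : inward_normal u P Q O -> inward_normal u Q P O.
Proof.
  intros (Hz & Hn & Hperp & Hin). repeat split; [exact Hz | exact Hn | |].
  - rewrite dot_vsub_swap, Hperp. ring.
  - replace (midpoint Q P) with (midpoint P Q) by (unfold midpoint; vec3_ring). exact Hin.
Qed.

Lemma flap_swap P Q O r th X : flap P Q O r th X -> flap Q P O r th X.
Proof.
  intros (u & Hu & ->). exists u. split; [now apply inward_normal_swap|].
  unfold midpoint. vec3_ring.
Qed.

Lemma on_seg_sym a b p : on_seg a b p -> on_seg b a p.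
Proof.
  intros (t & Ht & ->). exists (1 - t). split; [lra | vec3_ring].
Qed.

Lemma flap_vz P Q O r th X :
  vz P = 0 -> vz Q = 0 -> flap P Q O r th X -> vz X = r * sin th.
Proof.
  intros HP HQ (u & (Hz & _) & ->). simpl. unfold midpoint. simpl.
  rewrite HP, HQ, Hz. ring.
Qed.

Lemma height_flap_opposite A B C r th X :
  vz A = 0 -> vz B = 0 -> vz C = 0 -> flap A B C r th X ->
  height A X B C = r * sin th * vz (cross (vsub B A) (vsub C A)).
Proof.
  intros HA HB HC (u & (Hu & _) & ->).
  destruct A, B, C, u. simpl in HA, HB, HC, Hu. subst.
  unfold height, tri_normal, midpoint. vec3_ring.
Qed.

Lemma unit_normals_balance a b u w al ta K1 K2 :
  dot u u = 1 -> dot w w = 1 -> dot u a = 0 -> dot w b = 0 ->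
  0 < dot u b -> 0 < dot w a -> 0 < al -> 0 < ta ->
  vadd (vscale al a) (vscale K1 u) = vadd (vscale ta b) (vscale K2 w) -> 0 < K1 + K2.
Proof.
  intros Hu Hw Hua Hwb Hub Hwa Hal Hta E.
  assert (Eu := f_equal (dot u) E). assert (Ew := f_equal (dot w) E).
  rewrite !dot_combination in Eu, Ew.
  assert (Hwu : dot w u = dot u w) by vec3_ring.
  assert (Hk : dot u w <= 1).
  { assert (0 <= dot (vsub u w) (vsub u w)) by (unfold dot; nra).
    assert (dot (vsub u w) (vsub u w) = dot u u + dot w w - 2 * dot u w) by vec3_ring.
    lra. }
  assert (Hsum : (K1 + K2) * (1 - dot u w) = ta * dot u b + al * dot w a) by nra.
  nra.
Qed.

(* Write p = al A + be X + ga B = Y + t (C - Y).  Comparing heights gives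
   be r sin th = (1 - t) r' sin th'; projecting the horizontal parts on the two inward normals
   shows be r cos th + (1 - t) r' cos th' > 0; together these give sin (th + th') > 0. *)
Lemma flap_crossing A B C X Y r r' th th' p :
  vz A = 0 -> vz B = 0 -> vz C = 0 -> 0 < r -> 0 < r' -> 0 < sin th ->
  flap A B C r th X -> flap B C A r' th' Y ->
  in_open_tri A X B p -> on_seg Y C p ->
  0 < sin th' /\ 0 < sin (th + th').
Proof.
  intros HA HB HC Hr Hr' Hs (u & Hu & EX) (w & Hw & EY)
    (al & be & ga & Hal & Hbe & Hga & Hsum & Ep) (t & Ht & Ep').
  apply inward_normal_facts in Hu as (Huz & Hun & Hu_perp & _ & Hu_in).
  apply inward_normal_facts in Hw as (Hwz & Hwn & Hw_perp & Hw_in & _).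
  rewrite sin_plus.
  set (c := cos th) in *. set (s := sin th) in *.
  set (c' := cos th') in *. set (s' := sin th') in *.
  set (K1 := be * r * c). set (K2 := (1 - t) * r' * c').
  assert (Ez : be * r * s = (1 - t) * r' * s').
  { apply (f_equal vz) in Ep, Ep'. rewrite Ep' in Ep. subst X Y.
    revert Ep. simpl. rewrite HA, HB, HC, Huz, Hwz. lra. }
  assert (Exy : vadd (vscale (al + be / 2) (vsub A B)) (vscale K1 u) =
                vadd (vscale ((1 + t) / 2) (vsub C B)) (vscale K2 w)).
  { subst X Y K1 K2. replace ga with (1 - al - be) in Ep by lra. rewrite Ep' in Ep.
    revert Ep Ez. destruct A, B, C, u, w. simpl in *. subst.
    unfold vadd, vsub, vscale, midpoint, ez. simpl. intros E Ez.
    injection E as Ex Ey _. f_equal; lra. }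
  assert (Hs' : 0 < s' /\ 0 < 1 - t).
  { assert (0 < be * r * s) by (apply Rmult_lt_0_compat; [apply Rmult_lt_0_compat|]; lra).
    assert (0 <= (1 - t) * r') by (apply Rmult_le_pos; lra).
    split; [|destruct (Req_dec t 1) as [->|]]; nra. }
  assert (HK : 0 < K1 + K2).
  { apply (unit_normals_balance _ _ _ _ _ _ _ _ Hun Hwn) in Exy; try lra.
    rewrite dot_vsub_swap, Hu_perp. ring. }
  assert (Hid : (be * r) * ((1 - t) * r') * (c * s' + s * c') = (be * r * s) * (K1 + K2))
    by (transitivity (K1 * ((1 - t) * r' * s') + be * r * s * K2);
        [unfold K1, K2; ring | rewrite <- Ez; ring]).
  assert (0 < (be * r) * ((1 - t) * r')) by (apply Rmult_lt_0_compat; nra).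
  assert (0 < be * r * s) by (apply Rmult_lt_0_compat; [apply Rmult_lt_0_compat|]; lra).
  split; [lra | nra].
Qed.

Lemma flap_crossing_mirror A B C X Z r r' th th' p :
  vz A = 0 -> vz B = 0 -> vz C = 0 -> 0 < r -> 0 < r' -> 0 < sin th ->
  flap A B C r th X -> flap C A B r' th' Z ->
  in_open_tri A X B p -> on_seg C Z p ->
  0 < sin th' /\ 0 < sin (th + th').
Proof.
  intros HA HB HC Hr Hr' Hs FX FZ Hin Hseg.
  apply (flap_crossing B A C X Z r r' th th' p); auto.
  - now apply flap_swap.
  - now apply flap_swap.
  - now apply in_open_tri_reverse.
  - now apply on_seg_sym.
Qed.

Lemma flap_triangle_contribs A B C X Y Z rX rY rZ thX thY thZ :
  vz A = 0 -> vz B = 0 -> vz C = 0 -> 0 < vz (cross (vsub B A) (vsub C A)) ->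
  0 < rX -> 0 < rY -> 0 < rZ ->
  flap A B C rX thX X -> flap B C A rY thY Y -> flap C A B rZ thZ Z ->
  0 < sin thX ->
  (crossing_contrib A X B Y C = 0%Z \/
   crossing_contrib A X B Y C = 1%Z /\ 0 < sin thY /\ 0 < sin (thX + thY)) /\
  (crossing_contrib A X B C Z = 0%Z \/
   crossing_contrib A X B C Z = (-1)%Z /\ 0 < sin thZ /\ 0 < sin (thX + thZ)).
Proof.
  intros HA HB HC Hccw HrX HrY HrZ FX FY FZ Hs.
  assert (HhC : 0 < height A X B C).
  { rewrite (height_flap_opposite A B C rX thX X HA HB HC FX).
    apply Rmult_lt_0_compat; [apply Rmult_lt_0_compat|]; assumption. }
  split.
  - destruct (crossing_contrib_spec A X B Y C) as [E | [(E & Hh & Hin) | (E & Hh & _)]];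
      [now left | right | lra].
    split; [exact E|].
    apply (flap_crossing A B C X Y rX rY thX thY (plane_crossing A X B Y C)); auto.
    apply plane_crossing_on_seg. unfold opposite_sides. lra.
  - destruct (crossing_contrib_spec A X B C Z) as [E | [(E & Hh & _) | (E & Hh & Hin)]];
      [now left | lra | right].
    split; [exact E|].
    apply (flap_crossing_mirror A B C X Z rX rZ thX thZ (plane_crossing A X B C Z)); auto.
    apply plane_crossing_on_seg. unfold opposite_sides. lra.
Qed.

(* a_i and b_i stand for the contributions of the edges e_(i+2) and e_(i+3) to Delta_i,
   s_k for sin theta_k > 0 and p_kl for sin (theta_k + theta_l) > 0. *)
Lemma cyclic_crossing_signs (s1 s2 s3 p12 p13 p23 : Prop) (a2 b2 a4 b4 a6 b6 : Z) :
  (s1 -> (a2 = 0 \/ a2 = 1 /\ s2 /\ p12) /\ (b2 = 0 \/ b2 = -1 /\ s3 /\ p13))%Z ->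
  (s2 -> (a4 = 0 \/ a4 = 1 /\ s3 /\ p23) /\ (b4 = 0 \/ b4 = -1 /\ s1 /\ p12))%Z ->
  (s3 -> (a6 = 0 \/ a6 = 1 /\ s1 /\ p13) /\ (b6 = 0 \/ b6 = -1 /\ s2 /\ p23))%Z ->
  (a2 = 0 \/ b4 = 0)%Z -> (a4 = 0 \/ b6 = 0)%Z -> (a6 = 0 \/ b2 = 0)%Z ->
  ((a2 + b2) * (a4 + b4) * (a6 + b6) = -1)%Z ->
  s1 -> s2 /\ s3 /\ p12 /\ p13 /\ p23.
Proof.
  intros T2 T4 T6 L24 L46 L62 Hprod S1.
  assert (Hnz : (a2 + b2 <> 0 /\ a4 + b4 <> 0 /\ a6 + b6 <> 0)%Z)
    by (repeat split; intro E; rewrite E in Hprod; lia).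
  destruct (T2 S1) as [[A2 | (A2 & S2 & P12)] [B2 | (B2 & S3 & P13)]]; try lia.
  - destruct L62 as [A6 | B2']; [|lia].
    destruct (T6 S3) as [_ [B6 | (B6 & S2 & P23)]]; [lia|].
    destruct L46 as [A4 | B6']; [|lia].
    destruct (T4 S2) as [_ [B4 | (B4 & _ & P12)]]; [lia|].
    tauto.
  - exfalso.
    destruct L24 as [A2' | B4]; [lia|].
    destruct (T4 S2) as [[A4 | (A4 & S3 & _)] _]; [lia|].
    destruct L46 as [A4' | B6]; [lia|].
    destruct (T6 S3) as [[A6 | (A6 & _)] _]; [lia|].
    rewrite A2, B2, A4, B4, A6, B6 in Hprod. lia.
Qed.

Lemma cross_sub_rotate A B C : cross (vsub C B) (vsub A B) = cross (vsub B A) (vsub C A).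
Proof. vec3_ring. Qed.

Lemma flapped_triangle_sines v1 v2 v3 v4 v5 v6 r1 r2 r3 th1 th2 th3 :
  vz v1 = 0 -> vz v3 = 0 -> vz v5 = 0 -> 0 < vz (cross (vsub v3 v1) (vsub v5 v1)) ->
  0 < r1 -> 0 < r2 -> 0 < r3 ->
  flap v1 v3 v5 r1 th1 v2 -> flap v3 v5 v1 r2 th2 v4 -> flap v5 v1 v3 r3 th3 v6 ->
  ((crossing_contrib v1 v2 v3 v4 v5 + crossing_contrib v1 v2 v3 v5 v6) *
   (crossing_contrib v3 v4 v5 v6 v1 + crossing_contrib v3 v4 v5 v1 v2) *
   (crossing_contrib v5 v6 v1 v2 v3 + crossing_contrib v5 v6 v1 v3 v4) = -1)%Z ->
  0 < sin th1 ->
  0 < sin th2 /\ 0 < sin th3 /\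
  0 < sin (th1 + th2) /\ 0 < sin (th1 + th3) /\ 0 < sin (th2 + th3).
Proof.
  intros Z1 Z3 Z5 Hccw P1 P2 P3 F1 F2 F3.
  assert (Hccw' := Hccw). rewrite <- cross_sub_rotate in Hccw'.
  assert (Hccw'' := Hccw'). rewrite <- cross_sub_rotate in Hccw''.
  assert (T2 := flap_triangle_contribs v1 v3 v5 v2 v4 v6 r1 r2 r3 th1 th2 th3
                  Z1 Z3 Z5 Hccw P1 P2 P3 F1 F2 F3).
  assert (T4 := flap_triangle_contribs v3 v5 v1 v4 v6 v2 r2 r3 r1 th2 th3 th1
                  Z3 Z5 Z1 Hccw' P2 P3 P1 F2 F3 F1).
  assert (T6 := flap_triangle_contribs v5 v1 v3 v6 v2 v4 r3 r1 r2 th3 th1 th2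
                  Z5 Z1 Z3 Hccw'' P3 P1 P2 F3 F1 F2).
  rewrite (Rplus_comm th2 th1) in T4. rewrite (Rplus_comm th3 th1), (Rplus_comm th3 th2) in T6.
  apply (cyclic_crossing_signs _ _ _ _ _ _ _ _ _ _ _ _ T2 T4 T6);
    apply crossing_contrib_shared_vertex.
Qed.

Lemma JCC_minus_one_one H : JCC H = ((-1)%Z, 1%Z) ->
  (Defs.Delta H 2 * Defs.Delta H 4 * Defs.Delta H 6 = -1)%Z /\ curl H = 1%Z.
Proof.
  intros E. assert (Hprod := f_equal fst E). assert (Hsq := f_equal snd E).
  cbn [JCC fst snd] in Hprod, Hsq. split; [exact Hprod|].
  assert (Hsq' : ((Defs.Delta H 2 * Defs.Delta H 4 * Defs.Delta H 6) ^ 2 * curl H = 1)%Z)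
    by (rewrite <- Hsq; ring).
  rewrite Hprod in Hsq'. lia.
Qed.

Lemma sgnZ_eq1 x : sgnZ x = 1%Z -> 0 < x.
Proof.
  unfold sgnZ. destruct (Rlt_dec 0 x); [easy|]. destruct (Rlt_dec x 0); discriminate.
Qed.

Lemma standard_position_ccw H : standard_position H ->
  vz (vtx H 1) = 0 /\ vz (vtx H 3) = 0 /\ vz (vtx H 5) = 0 /\
  0 < vz (cross (vsub (vtx H 3) (vtx H 1)) (vsub (vtx H 5) (vtx H 1))).
Proof.
  intros (E1 & Y3 & Z3 & X3 & Z5 & Y5). rewrite E1. simpl.
  rewrite Y3. repeat split; auto. nra.
Qed.

Lemma curl_planar H :
  vz (vtx H 1) = 0 -> vz (vtx H 3) = 0 -> vz (vtx H 5) = 0 ->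
  curl H = sgnZ (vz (cross (vsub (vtx H 3) (vtx H 1)) (vsub (vtx H 5) (vtx H 1))) *
                 vz (vtx H 2)).
Proof.
  intros Z1 Z3 Z5. unfold curl. f_equal.
  destruct (vtx H 1), (vtx H 2), (vtx H 3), (vtx H 5).
  simpl in *. subst. vec3_ring.
Qed.

Lemma sin_pos_of_curl H r th :
  vz (vtx H 1) = 0 -> vz (vtx H 3) = 0 -> vz (vtx H 5) = 0 ->
  0 < vz (cross (vsub (vtx H 3) (vtx H 1)) (vsub (vtx H 5) (vtx H 1))) -> 0 < r ->
  flap (vtx H 1) (vtx H 3) (vtx H 5) r th (vtx H 2) -> curl H = 1%Z -> 0 < sin th.
Proof.
  intros Z1 Z3 Z5 Hccw Hr F Hcurl.
  rewrite curl_planar, (flap_vz _ _ _ _ _ _ Z1 Z3 F) in Hcurl by assumption.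
  apply sgnZ_eq1 in Hcurl.
  apply (Rmult_lt_reg_l (vz (cross (vsub (vtx H 3) (vtx H 1)) (vsub (vtx H 5) (vtx H 1))) * r));
    [now apply Rmult_lt_0_compat | now rewrite Rmult_0_r, Rmult_assoc].
Qed.

Lemma flap_radius_pos d : 0 < d < 2 -> 0 < 1/2 * sqrt (4 - d ^ 2).
Proof. intros Hd. apply Rmult_lt_0_compat; [lra|]. apply sqrt_lt_R0. nra. Qed.

Lemma angle_lt_PI_of_sin_pos a : 0 <= a < 2 * PI -> 0 < sin a -> 0 < a < PI.
Proof.
  intros Ha Hs. split.
  - destruct (Req_dec a 0) as [->|]; [rewrite sin_0 in Hs|]; lra.
  - destruct (Rlt_le_dec a PI); [easy|]. pose proof (sin_le_0 a). lra.
Qed.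

Lemma angle_sum_lt_PI a b : 0 <= a < 2 * PI -> 0 <= b < 2 * PI ->
  0 < sin a -> 0 < sin b -> 0 < sin (a + b) -> a + b < PI.
Proof.
  intros Ha Hb Sa Sb Sab.
  apply angle_lt_PI_of_sin_pos in Ha; [|exact Sa]. apply angle_lt_PI_of_sin_pos in Hb; [|exact Sb].
  destruct (Rlt_le_dec (a + b) PI); [easy|]. pose proof (sin_le_0 (a + b)). lra.
Qed.

Theorem mainTheorem9 :
  forall (H : hexagon) (theta1 theta2 theta3 : R),
    equilateral H -> embedded H -> standard_position H -> aa_defined H ->
    theta_coord H 1 theta1 -> theta_coord H 2 theta2 -> theta_coord H 3 theta3 ->
    JCC H = ((-1)%Z, 1%Z) ->
    (0 < theta1 < PI /\ 0 < theta2 < PI /\ 0 < theta3 < PI) /\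
    theta1 + theta2 < PI /\ theta1 + theta3 < PI /\ theta2 + theta3 < PI.
Proof.
  intros H th1 th2 th3 _ _ Hstd [_ Hd] [R1 F1] [R2 F2] [R3 F3] HJ.
  destruct (JCC_minus_one_one H HJ) as [Hprod Hcurl].
  rewrite !Delta_opposite_edges in Hprod by lia.
  destruct (standard_position_ccw H Hstd) as (Z1 & Z3 & Z5 & Hccw).
  assert (P1 := flap_radius_pos _ (Hd 1%nat ltac:(lia))).
  assert (P2 := flap_radius_pos _ (Hd 2%nat ltac:(lia))).
  assert (P3 := flap_radius_pos _ (Hd 3%nat ltac:(lia))).
  assert (S1 := sin_pos_of_curl H _ th1 Z1 Z3 Z5 Hccw P1 F1 Hcurl).
  (* [Hprod] mentions [vtx H (6 + 2)] and the like, which compute to [vtx H 2], ... *)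
  destruct (flapped_triangle_sines (vtx H 1) (vtx H 2) (vtx H 3) (vtx H 4) (vtx H 5)
              (vtx H 6) _ _ _ th1 th2 th3 Z1 Z3 Z5 Hccw P1 P2 P3 F1 F2 F3 Hprod S1)
    as (S2 & S3 & S12 & S13 & S23).
  split; [split; [|split]; apply angle_lt_PI_of_sin_pos; assumption|].
  split; [|split]; apply angle_sum_lt_PI; assumption.
Qed.
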